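(* Let $[a,b]\subset[0,1]$, $c\in(0,1]$, $K=\{u\in\mathcal C([0,1]): u\ge 0,\ \min_{t\in[a,b]}u(t)\ge c\|u\|\}$ with the supremum norm $\|\cdot\|$. Assume: (H1) $f:[0,1]\times[0,\infty)\to[0,\infty)$ is such that $f(\cdot,u(\cdot))$ is measurable whenever $u\in\mathcal C([0,1])$, and for each $r>0$ there is $R>0$ with $f(t,u)\le R$ for a.a. $t\in[0,1]$ and all $u\in[0,r]$; (H2) $g$ is measurable and $g\ge 0$ a.e.; (H3) $k:[0,1]\times[0,1]\to[0,\infty)$ is continuous; (H4) there is a measurable $\Phi:[0,1]\to[0,\infty)$ with $\Phi g\in L^1(0,1)$, $\int_a^b\Phi g>0$, $k(t,s)\le\Phi(s)$ for all $t,s\in[0,1]$ and $c\Phi(s)\le k(t,s)$ for $t\in[a,b]$, $s\in[0,1]$. Let $T:K\to K$, $Tu(t)=\int_0^1k(t,s)g(s)f(s,u(s))\,ds$, and let $\mathbb T$ be its closed--convex envelope. Suppose that $\{u\}\cap\mathbb{T}u\subset\{Tu\}$ for all $u\in K\cap\mathbb{T}K$, and that there exist $\rho>0$ and $\varepsilon>0$ such that $f_{\rho,\varepsilon}>M(a,b)$, where $$f_{\rho,\varepsilon}:=\inf_{a\le t\le b,\ c(\rho-\varepsilon)\le u\le \frac{\rho}{c}+\varepsilon}\frac{f(t,u)}{\rho},\qquad \frac1{M(a,b)}:=\inf_{t\in[a,b]}\int_a^bk(t,s)g(s)\,ds.$$ Let $V_\rho=\{u\in K:\min_{a\le t\le b}u(t)<\rho\}$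 and $e(t)\equiv1$. Then $u\notin\mathbb{T}u+\lambda e$ for all $u\in\partial V_\rho$ and all $\lambda\ge0$.
   Context: The closed--convex envelope of $T:K\to K$ is $\mathbb{T}u=\bigcap_{\varepsilon>0}\overline{\mathrm{co}}\,T\big(\overline B_\varepsilon(u)\cap K\big)$, with $\overline B_\varepsilon(u)$ the closed ball in $\mathcal C([0,1])$ and $\overline{\mathrm{co}}$ the closed convex hull; $\mathbb TK=\bigcup_{u\in K}\mathbb Tu$ and $\mathbb Tu+\lambda e=\{y+\lambda e:y\in\mathbb Tu\}$. $V_\rho$ is a relatively open subset of $K$ and $\partial V_\rho$ denotes its boundary relative to $K$. *)

(* R : realType; C([0,1]) elements are functions
   R -> R continuous on `[0,1]; all comparisons happen on `[0,1]. *)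
From HB Require Import structures.
From mathcomp Require Import all_boot all_order all_algebra.
From mathcomp Require Import all_classical all_reals all_analysis.
Set Implicit Arguments. Unset Strict Implicit. Unset Printing Implicit Defensive.
Import Order.TTheory GRing.Theory Num.Theory.
Import numFieldNormedType.Exports.
Local Open Scope classical_set_scope.
Local Open Scope ring_scope.

Section Defs.
Variable R : realType.

Definition isC (u : R -> R) : Prop := {within `[0, 1], continuous u}.

Definition supnorm (u : R -> R) : R := sup [set `|u t| | t in `[0, 1]].

Definition minab (a b : R) (u : R -> R) : R := inf [set u t | t in `[a, b]].

Definition Kcone (a b c : R) (u : R -> R) : Prop :=
  isC u /\ (forall t, t \in `[0, 1] -> 0 <= u t) /\ c * supnorm u <= minab a b u.

Definition cball (u : R -> R) (e : R) (v : R -> R) : Prop :=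
  forall t, t \in `[0, 1] -> `|u t - v t| <= e.

Definition convhull (A : set (R -> R)) (z : R -> R) : Prop :=
  exists n (w : 'I_n -> R) (x : 'I_n -> (R -> R)),
    (forall i, 0 <= w i) /\ \sum_(i < n) w i = 1 /\ (forall i, A (x i)) /\
    z = (fun t => \sum_(i < n) w i * x i t).

Definition clconvhull (A : set (R -> R)) (y : R -> R) : Prop :=
  isC y /\ forall d, 0 < d -> exists z, convhull A z /\ cball y d z.

Definition Top (k : R -> R -> R) (g : R -> R) (f : R -> R -> R) (u : R -> R)
  : R -> R :=
  fun t => \int[@lebesgue_measure R]_(s in `[0, 1]) (k t s * g s * f s (u s)).

Definition envelope (K : set (R -> R)) (T : (R -> R) -> (R -> R))
  (u : R -> R) : set (R -> R) :=
  fun y => forall e, 0 < e ->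
    clconvhull (fun z => exists v, K v /\ cball u e v /\ z = T v) y.

Definition envelopeK (K : set (R -> R)) (T : (R -> R) -> (R -> R))
  : set (R -> R) := fun y => exists u, K u /\ envelope K T u y.

Definition rel_boundary (K V : set (R -> R)) (u : R -> R) : Prop :=
  K u /\
  (forall d, 0 < d -> exists v, K v /\ V v /\ cball u d v) /\
  (forall d, 0 < d -> exists v, K v /\ ~ V v /\ cball u d v).

Definition f_re (a b c : R) (f : R -> R -> R) (rho eps : R) : R :=
  inf [set f t x / rho | t in `[a, b] & x in
        [set x | 0 <= x /\ c * (rho - eps) <= x /\ x <= rho / c + eps]].

Definition Mab (a b : R) (k : R -> R -> R) (g : R -> R) : R :=
  (inf [set \int[@lebesgue_measure R]_(s in `[a, b]) (k t s * g s)
       | t in `[a, b]])^-1.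

End Defs.

From HB Require Import structures.
From mathcomp Require Import all_boot all_order all_algebra.
From mathcomp Require Import all_classical all_reals all_analysis.
From mathcomp Require Import measurable_realfun lra.
Import Order.TTheory GRing.Theory Num.Theory.
Import numFieldNormedType.Exports.
Local Open Scope classical_set_scope.
Local Open Scope ring_scope.

(* The minimum over [a,b] is 1-Lipschitz for the sup norm, so on the relative
   boundary of V_rho it equals rho; the cone condition then gives
   u <= rho/c on [0,1].  Hence every v in K within eps of u takes values in
   [c(rho-eps), rho/c+eps] on [a,b], where f(s, v s) >= rho f_{rho,eps}, and
   so T v >= rho f_{rho,eps} / M(a,b) > rho on [a,b].  This uniform lower bound
   passes to convex combinations and their uniform limits, i.e. to every y in
   the envelope of u, and u = y + lam with lam >= 0 would force min u > rho. *)

Section minimum_on_ab.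
Context {R : realType} {a b : R}.
Hypotheses (ha : 0 <= a) (hab : a <= b) (hb : b <= 1).

Lemma subset_itv_ab01 : `[a, b] `<=` (`[0, 1] : set R).
Proof.
move=> x /=; rewrite !in_itv /= => /andP[ax xb].
by rewrite (le_trans ha ax) (le_trans xb hb).
Qed.

Lemma in_itv_ab01 {t : R} : t \in `[a, b] -> t \in `[0, 1].
Proof. by rewrite !inE; apply: subset_itv_ab01. Qed.

Lemma minab_le {u : R -> R} {t : R} : (forall s, s \in `[a, b] -> 0 <= u s) ->
  t \in `[a, b] -> minab a b u <= u t.
Proof.
move=> u0 tab; apply: ge_inf; last by exists t.
by exists 0 => _ [s sab <-]; apply: u0.
Qed.

Lemma minab_ge (u : R -> R) r : (forall s, s \in `[a, b] -> r <= u s) ->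
  r <= minab a b u.
Proof.
move=> ru; apply: lb_le_inf; last by move=> _ [s sab <-]; apply: ru.
by exists (u a), a => //=; rewrite in_itv /= lexx hab.
Qed.

Lemma cball_sym {u v : R -> R} {d : R} : cball u d v -> cball v d u.
Proof. by move=> uv t t01; rewrite distrC; apply: uv. Qed.

Lemma minab_cball {u v : R -> R} {d : R} :
  (forall s, s \in `[a, b] -> 0 <= u s) -> cball u d v ->
  minab a b u <= minab a b v + d.
Proof.
move=> u0 uv; rewrite -lerBlDr; apply: minab_ge => s sab.
have := minab_le u0 sab; have := uv s (in_itv_ab01 sab).
rewrite ler_norml => /andP[? ?] ?; lra.
Qed.

Lemma rel_boundary_minab {K : set (R -> R)} {rho : R} {u : R -> R} :
  (forall v, K v -> forall s, s \in `[a, b] -> 0 <= v s) ->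
  rel_boundary K (fun v => K v /\ minab a b v < rho) u -> minab a b u = rho.
Proof.
move=> K0 [Ku [inV outV]]; apply/eqP; rewrite eq_le; apply/andP; split.
- rewrite leNgt -subr_gt0; apply/negP => d_gt0.
  have [v [Kv [[_ v_lt] uv]]] := inV _ d_gt0.
  have := minab_cball (K0 _ Ku) uv; lra.
- rewrite leNgt; apply/negP => lt_rho.
  have d_gt0 : 0 < (rho - minab a b u) / 2 by rewrite divr_gt0 ?subr_gt0.
  have [v [Kv [v_ge uv]]] := outV _ d_gt0.
  have := minab_cball (K0 _ Kv) (cball_sym uv).
  have : rho <= minab a b v by rewrite leNgt; apply/negP => ?; apply: v_ge.
  lra.
Qed.

Lemma Kcone_ge0 {c : R} (v : R -> R) : Kcone a b c v ->
  forall s, s \in `[a, b] -> 0 <= v s.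
Proof. by move=> [_ [v_ge0 _]] s /in_itv_ab01; apply: v_ge0. Qed.

End minimum_on_ab.

Lemma normr_le_supnorm {R : realType} {u : R -> R} {t : R} : isC u ->
  t \in `[0, 1] -> `|u t| <= supnorm u.
Proof.
move=> cu t01.
have cnu : {within `[0, 1], continuous (Num.norm \o u)}.
  by move=> s; apply: continuous_comp (cu s) _; exact: norm_continuous.
have [m _ hm] := EVT_max ler01 cnu.
apply: ub_le_sup; last by exists t.
by exists `|u m| => _ [s s01 <-]; apply: hm.
Qed.

Lemma Kcone_mul_le_minab {R : realType} {a b c : R} {u : R -> R} {t : R} :
  0 <= c -> Kcone a b c u -> t \in `[0, 1] -> c * u t <= minab a b u.
Proof.
move=> c_ge0 [u_cont [_ u_cone]] t01; apply: le_trans u_cone.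
by rewrite ler_wpM2l // (le_trans (ler_norm _) (normr_le_supnorm u_cont t01)).
Qed.

Lemma convhull_ge {R : realType} {A : set (R -> R)} {r t : R} {z : R -> R} :
  (forall x, A x -> r <= x t) -> convhull A z -> r <= z t.
Proof.
move=> rA [n [w [x [w0 [w1 [Ax ->]]]]]].
rewrite -[r]mul1r -w1 mulr_suml; apply: ler_sum => i _.
by rewrite ler_wpM2l ?rA.
Qed.

Lemma clconvhull_ge {R : realType} {A : set (R -> R)} {r t : R} {y : R -> R} :
  (forall x, A x -> r <= x t) -> t \in `[0, 1] -> clconvhull A y -> r <= y t.
Proof.
move=> rA t01 [_ yA]; apply/ler_addgt0Pr => d d_gt0.
have [z [Az yz]] := yA _ d_gt0.
have := convhull_ge rA Az; have := yz _ t01.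
rewrite ler_norml => /andP[? ?] ?; lra.
Qed.

Lemma continuous_within_section {T U V : topologicalType} {pT : predType T}
  {pU : predType U} {A : pT} {B : pU} (k : T -> U -> V) (t : T) :
  {within [set p : T * U | p.1 \in A /\ p.2 \in B],
    continuous (fun p : T * U => k p.1 p.2)} ->
  t \in A -> {within [set` B], continuous (k t)}.
Proof.
move=> /subspace_continuousP kc tA; apply/subspace_continuousP => s Bs.
have /kc : [set p : T * U | p.1 \in A /\ p.2 \in B] (t, s) by [].
move=> /= kts W /kts; rewrite /within /= !near_simpl => ktsW.
have pair_cvg : (fun x : U => (t, x)) @ nbhs s --> nbhs (t, s).
  by apply: cvg_pair; [exact: cvg_cst | exact: cvg_id].
move: (pair_cvg _ ktsW); rewrite /= !near_simpl.
by apply: filterS => x ktx Bx; apply: ktx.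
Qed.

Section Rintegral_complements.
Context d (T : measurableType d) (R : realType).
Variable mu : {measure set T -> \bar R}.

Lemma ae_le_integrable (D : set T) (f h : T -> R) : measurable D ->
  measurable_fun D f -> {ae mu, forall x, D x -> `|f x| <= `|h x|} ->
  mu.-integrable D (EFin \o h) -> mu.-integrable D (EFin \o f).
Proof.
move=> mD mf fh /integrableP[mh hfin]; apply/integrableP; split.
  exact/measurable_EFinP.
apply: le_lt_trans hfin; apply: ae_ge0_le_integral => //.
- by apply: measurableT_comp => //; exact/measurable_EFinP.
- exact: measurableT_comp.
Qed.

Lemma ae_eq_Rintegral (D : set T) (f h : T -> R) : measurable D ->
  measurable_fun D f -> measurable_fun D h ->
  {ae mu, forall x, D x -> f x = h x} ->
  \int[mu]_(x in D) f x = \int[mu]_(x in D) h x.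
Proof.
move=> mD mf mh fh; congr fine; apply: ae_eq_integral => //.
- exact/measurable_EFinP.
- exact/measurable_EFinP.
- by move: fh; apply: filterS => x fhx Dx; rewrite fhx.
Qed.

Lemma ge0_subset_Rintegral (A B : set T) (f : T -> R) :
  measurable A -> measurable B -> A `<=` B ->
  mu.-integrable B (EFin \o f) -> (forall x, B x -> 0 <= f x) ->
  \int[mu]_(x in A) f x <= \int[mu]_(x in B) f x.
Proof.
move=> mA mB AB intf f0; apply: fine_le.
- by apply: integrable_fin_num => //; exact: integrableS intf.
- exact: integrable_fin_num.
- by apply: ge0_subset_integral => //; case/integrableP: intf.
Qed.

Lemma ge0_le_Rintegral (D : set T) (f1 f2 : T -> R) : measurable D ->
  measurable_fun D f1 -> mu.-integrable D (EFin \o f2) ->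
  (forall x, D x -> 0 <= f1 x) -> (forall x, D x -> f1 x <= f2 x) ->
  \int[mu]_(x in D) f1 x <= \int[mu]_(x in D) f2 x.
Proof.
move=> mD mf1 intf2 f1_ge0 f12; apply: le_Rintegral => //.
apply: le_integrable intf2 => //; first exact/measurable_EFinP.
move=> x Dx; have f2_ge0 := le_trans (f1_ge0 _ Dx) (f12 _ Dx).
by rewrite /= lee_fin !ger0_norm ?f12 ?f1_ge0.
Qed.

Lemma Rintegral_gt0 (D : set T) (f : T -> R) : measurable D ->
  mu.-integrable D (EFin \o f) -> (0 < \int[mu]_(x in D) (f x)%:E)%E ->
  0 < \int[mu]_(x in D) f x.
Proof.
by move=> mD intf f_gt0; apply: fine_gt0; rewrite f_gt0 integrable_lty.
Qed.

End Rintegral_complements.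

Section kernel_integrals.
Context {R : realType} {g Phi : R -> R} {k : R -> R -> R}.
Local Notation mu := (@lebesgue_measure R).
Hypothesis g_meas : measurable_fun (`[0, 1] : set R) g.
Hypothesis g_ae_ge0 : {ae mu, forall t, t \in `[0, 1] -> 0 <= g t}.
Hypothesis k_meas :
  forall t, t \in `[0, 1] -> measurable_fun (`[0, 1] : set R) (k t).
Hypothesis k_ge0 : forall t s, t \in `[0, 1] -> s \in `[0, 1] -> 0 <= k t s.
Hypothesis Phi_meas : measurable_fun (`[0, 1] : set R) Phi.
Hypothesis Phi_ge0 : forall s, s \in `[0, 1] -> 0 <= Phi s.
Hypothesis Phig_int : mu.-integrable `[0, 1] (fun s => (Phi s * g s)%:E).
Hypothesis k_le_Phi :
  forall t s, t \in `[0, 1] -> s \in `[0, 1] -> k t s <= Phi s.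

(* [g] is only a.e. nonnegative; its positive part [gp] gives the same
   weighted integrals and makes all integrands pointwise nonnegative. *)
Let gp := g \max cst 0.

(* Typeclass inference does not find the a.e. filter of [mu] by itself. *)
Let ae_filterS := @filterS _ _ (ae_filter_ringOfSetsType mu).

Let gp_ge0 s : 0 <= gp s.
Proof. by rewrite /gp /= le_max lexx orbT. Qed.

Let gp_meas : measurable_fun (`[0, 1] : set R) gp.
Proof. by apply: measurable_maxr => //; exact: measurable_cst. Qed.

Let gp_ae_eq : {ae mu, forall s, s \in `[0, 1] -> gp s = g s}.
Proof.
by move: g_ae_ge0; apply: ae_filterS => s g0 /g0 gs0; rewrite /gp /= max_l.
Qed.

Lemma Rintegral_pos_part (D : set R) (h : R -> R) : measurable D ->
  D `<=` `[0, 1] -> measurable_fun D h ->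
  \int[mu]_(s in D) (h s * g s) = \int[mu]_(s in D) (h s * gp s).
Proof.
move=> mD D01 mh; apply: ae_eq_Rintegral => //.
- by apply: measurable_funM => //; exact: measurable_funS g_meas.
- by apply: measurable_funM => //; exact: measurable_funS gp_meas.
- move: gp_ae_eq; apply: ae_filterS => s gpg Ds.
  by rewrite gpg // inE; exact: D01.
Qed.

Let Phi_gp_int : mu.-integrable `[0, 1] (EFin \o (fun s => Phi s * gp s)).
Proof.
apply: (@ae_le_integrable _ _ _ mu _ _ (fun s => Phi s * g s)) => //.
- exact: measurable_funM.
- by move: gp_ae_eq; apply: ae_filterS => s gpg s01; rewrite gpg // inE.
Qed.

Let k_gp_int {t : R} : t \in `[0, 1] ->
  mu.-integrable `[0, 1] (EFin \o (fun s => k t s * gp s)).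
Proof.
move=> t01; apply: (le_integrable _ _ _ Phi_gp_int) => //.
- by apply/measurable_EFinP; apply: measurable_funM => //; exact: k_meas.
- move=> s s01; have s01' : s \in `[0, 1] by rewrite inE.
  rewrite /= lee_fin !ger0_norm ?mulr_ge0 ?Phi_ge0 ?k_ge0 //.
  by rewrite ler_wpM2r ?k_le_Phi.
Qed.

Lemma kernel_mass_ge (a b c : R) t : `[a, b] `<=` (`[0, 1] : set R) -> 0 < c ->
  (forall s, s \in `[0, 1] -> c * Phi s <= k t s) -> t \in `[0, 1] ->
  c * \int[mu]_(s in `[a, b]) (Phi s * g s) <=
    \int[mu]_(s in `[a, b]) (k t s * g s).
Proof.
move=> ab01 c_gt0 cPhi_le_k t01.
rewrite !Rintegral_pos_part //; first last.
- exact: measurable_funS Phi_meas.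
- exact: measurable_funS (k_meas _ t01).
rewrite -(@RintegralZl _ _ _ mu) //; last exact: integrableS Phi_gp_int.
apply: ge0_le_Rintegral => //.
- apply: measurable_funM; first exact: measurable_cst.
  apply: measurable_funM; first exact: measurable_funS Phi_meas.
  exact: measurable_funS gp_meas.
- exact: integrableS (k_gp_int t01).
- by move=> s /ab01 s01; rewrite !mulr_ge0 ?(ltW c_gt0) ?Phi_ge0 ?inE.
- move=> s /ab01 s01; rewrite mulrA ler_wpM2r //; apply: cPhi_le_k.
  by rewrite inE.
Qed.

Section operator.
Variables (f : R -> R -> R) (v : R -> R) (r Rb : R).
Hypothesis f_ge0 : forall s x, s \in `[0, 1] -> 0 <= x -> 0 <= f s x.
Hypothesis fv_meas : measurable_fun (`[0, 1] : set R) (fun s => f s (v s)).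
Hypothesis f_le_Rb :
  {ae mu, forall s, s \in `[0, 1] -> forall x, 0 <= x <= r -> f s x <= Rb}.
Hypothesis v_range : forall s, s \in `[0, 1] -> 0 <= v s <= r.

(* [Top] is a [fine]d integral, which is 0 when the integral diverges: lower
   bounds on it need the integrability provided by the a.e. bound on [f]. *)
Let k_f_gp_int {t : R} : t \in `[0, 1] ->
  mu.-integrable `[0, 1] (EFin \o (fun s => k t s * f s (v s) * gp s)).
Proof.
move=> t01.
apply: (@ae_le_integrable _ _ _ mu _ _ (fun s => Rb * (Phi s * gp s))) => //.
- by apply: measurable_funM => //; apply: measurable_funM => //; exact: k_meas.
- move: f_le_Rb; apply: ae_filterS => s f_le_Rb' s01.
  have s01' : s \in `[0, 1] by rewrite inE.
  have [v_ge0 _] := andP (v_range _ s01').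
  have fv_ge0 := f_ge0 _ _ s01' v_ge0.
  have fv_le_Rb := f_le_Rb' s01' _ (v_range _ s01').
  have Rb_ge0 := le_trans fv_ge0 fv_le_Rb.
  rewrite !ger0_norm ?mulr_ge0 ?k_ge0 ?Phi_ge0 //.
  by rewrite mulrA [Rb * _]mulrC ler_wpM2r // ler_pM ?k_ge0 ?k_le_Phi.
- exact: (eq_integrable _ _ _ _ (integrableZl _ Rb Phi_gp_int)).
Qed.

Lemma Top_ge {a b L t : R} : `[a, b] `<=` (`[0, 1] : set R) ->
  0 <= L -> (forall s, s \in `[a, b] -> L <= f s (v s)) -> t \in `[0, 1] ->
  L * \int[mu]_(s in `[a, b]) (k t s * g s) <= Top k g f v t.
Proof.
move=> ab01 L_ge0 L_le_f t01.
have k_meas_ab : measurable_fun `[a, b] (k t).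
  exact: measurable_funS (k_meas _ t01).
rewrite /Top.
rewrite [X in _ <= X](@eq_Rintegral _ _ _ mu _ (fun s => k t s * f s (v s) * g s));
  last by move=> s _; rewrite mulrAC.
rewrite [X in _ <= X]Rintegral_pos_part //;
  last exact: measurable_funM (k_meas _ t01) fv_meas.
rewrite [X in _ * X]Rintegral_pos_part // -(@RintegralZl _ _ _ mu) //;
  last exact: integrableS (k_gp_int t01).
apply: (@le_trans _ _ (\int[mu]_(s in `[a, b]) (k t s * f s (v s) * gp s))).
  apply: ge0_le_Rintegral => //.
  - apply: measurable_funM; first exact: measurable_cst.
    by apply: measurable_funM => //; exact: measurable_funS gp_meas.
  - exact: integrableS (k_f_gp_int t01).
  - by move=> s /ab01 s01; rewrite !mulr_ge0 ?k_ge0 ?inE.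
  - move=> s sab; have s01 : s \in `[0, 1] by rewrite inE; exact: ab01.
    by rewrite mulrA ler_wpM2r // mulrC ler_wpM2l ?k_ge0 ?L_le_f ?inE.
apply: ge0_subset_Rintegral => //; first exact: k_f_gp_int.
move=> s s01; have s01' : s \in `[0, 1] by rewrite inE.
have [v_ge0 _] := andP (v_range _ s01').
by rewrite !mulr_ge0 ?k_ge0 ?f_ge0.
Qed.

End operator.

End kernel_integrals.

Section Mab_bounds.
Context {R : realType} {a b : R} {k : R -> R -> R} {g : R -> R} {m : R}.
Hypothesis hab : a <= b.
Hypothesis m_gt0 : 0 < m.
Hypothesis m_le : forall t, t \in `[a, b] ->
  m <= \int[@lebesgue_measure R]_(s in `[a, b]) (k t s * g s).

Lemma Mab_inv_gt0 : 0 < (Mab a b k g)^-1.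
Proof.
rewrite /Mab invrK; apply: lt_le_trans m_gt0 (lb_le_inf _ _).
  exists (\int[@lebesgue_measure R]_(s in `[a, b]) (k a s * g s)), a => //=.
  by rewrite in_itv /= lexx hab.
by move=> _ [t tab <-]; apply: m_le.
Qed.

Lemma Mab_inv_le t : t \in `[a, b] ->
  (Mab a b k g)^-1 <= \int[@lebesgue_measure R]_(s in `[a, b]) (k t s * g s).
Proof.
move=> tab; rewrite /Mab invrK; apply: ge_inf; last by exists t.
by exists m => _ [s sab <-]; apply: m_le.
Qed.

End Mab_bounds.

Lemma f_re_le (R : realType) (a b c : R) (f : R -> R -> R) (rho eps t x : R) :
  0 < rho -> (forall s y, s \in `[a, b] -> 0 <= y -> 0 <= f s y) ->
  t \in `[a, b] -> 0 <= x -> c * (rho - eps) <= x -> x <= rho / c + eps ->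
  rho * f_re a b c f rho eps <= f t x.
Proof.
move=> rho_gt0 f_ge0 tab x_ge0 x_lo x_hi; rewrite mulrC -ler_pdivlMr //.
apply: ge_inf; last by exists t => //; exists x.
exists 0 => _ [s sab [y [y_ge0 _] <-]].
by rewrite divr_ge0 ?f_ge0 ?(ltW rho_gt0) ?inE.
Qed.

Section boundary_condition.
Context {R : realType} {a b c : R} {f : R -> R -> R} {g Phi : R -> R}.
Context {k : R -> R -> R} {rho eps : R}.
Local Notation mu := (@lebesgue_measure R).
Hypotheses (ha : 0 <= a) (hab : a <= b) (hb : b <= 1).
Hypotheses (hc0 : 0 < c) (hc1 : c <= 1).
Hypothesis hf0 : forall t x, t \in `[0, 1] -> 0 <= x -> 0 <= f t x.
Hypothesis hfmeas : forall u : R -> R, isC u ->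
  (forall t, t \in `[0, 1] -> 0 <= u t) ->
  measurable_fun (`[0, 1] : set R) (fun t => f t (u t)).
Hypothesis hfbd : forall r : R, 0 < r -> exists2 Rb : R, 0 < Rb &
  {ae mu, forall t, t \in `[0, 1] -> forall x, 0 <= x <= r -> f t x <= Rb}.
Hypothesis hgmeas : measurable_fun (`[0, 1] : set R) g.
Hypothesis hg0 : {ae mu, forall t, t \in `[0, 1] -> 0 <= g t}.
Hypothesis hkc : {within [set p : R * R | p.1 \in `[0, 1] /\ p.2 \in `[0, 1]],
  continuous (fun p : R * R => k p.1 p.2)}.
Hypothesis hk0 : forall t s, t \in `[0, 1] -> s \in `[0, 1] -> 0 <= k t s.
Hypothesis hPhimeas : measurable_fun (`[0, 1] : set R) Phi.
Hypothesis hPhi0 : forall s, s \in `[0, 1] -> 0 <= Phi s.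
Hypothesis hPhig : mu.-integrable `[0, 1] (fun s => (Phi s * g s)%:E).
Hypothesis hPhigpos : (0 < \int[mu]_(s in `[a, b]) (Phi s * g s)%:E)%E.
Hypothesis hkPhi : forall t s, t \in `[0, 1] -> s \in `[0, 1] -> k t s <= Phi s.
Hypothesis hPhik :
  forall t s, t \in `[a, b] -> s \in `[0, 1] -> c * Phi s <= k t s.
Hypotheses (hrho : 0 < rho) (heps : 0 < eps).
Hypothesis hfM : Mab a b k g < f_re a b c f rho eps.

Let ab01 := subset_itv_ab01 ha hb.
Let in01 {t : R} : t \in `[a, b] -> t \in `[0, 1] := in_itv_ab01 ha hb.

Let k_meas t : t \in `[0, 1] -> measurable_fun (`[0, 1] : set R) (k t).
Proof.
move=> t01; apply: subspace_continuous_measurable_fun => //.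
exact: continuous_within_section k t hkc t01.
Qed.

Let m := (Mab a b k g)^-1.
Let F := f_re a b c f rho eps.

Let kernel_mass_lb t : t \in `[a, b] ->
  c * \int[mu]_(s in `[a, b]) (Phi s * g s) <=
    \int[mu]_(s in `[a, b]) (k t s * g s).
Proof.
move=> tab.
apply: (kernel_mass_ge hgmeas hg0 k_meas hk0 hPhimeas hPhi0 hPhig hkPhi) => //.
- by move=> s; apply: hPhik.
- exact: in01.
Qed.

Let m_gt0 : 0 < m.
Proof.
apply: (Mab_inv_gt0 hab _ kernel_mass_lb); rewrite mulr_gt0 // Rintegral_gt0 //.
exact: integrableS hPhig.
Qed.

Let m_le t : t \in `[a, b] -> m <= \int[mu]_(s in `[a, b]) (k t s * g s).
Proof. exact: Mab_inv_le kernel_mass_lb t. Qed.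

Let F_gt0 : 0 < F.
Proof. by apply: lt_trans hfM; rewrite -invr_gt0. Qed.

Let rho_lt : rho < rho * F * m.
Proof.
rewrite -mulrA -[X in X < _]mulr1 ltr_pM2l // -(mulVf (lt0r_neq0 m_gt0)).
by rewrite ltr_pM2r // /m invrK.
Qed.

Context {u : R -> R}.
Hypotheses (Ku : Kcone a b c u) (min_u : minab a b u = rho).

Let u_le {s : R} : s \in `[0, 1] -> u s <= rho / c.
Proof.
by move=> s01; rewrite ler_pdivlMr // mulrC -min_u Kcone_mul_le_minab ?ltW.
Qed.

Lemma cball_boundary_range {v : R -> R} {s : R} :
  Kcone a b c v -> cball u eps v -> s \in `[0, 1] -> 0 <= v s <= rho / c + eps.
Proof.
move=> [_ [v_ge0 _]] uv s01; rewrite v_ge0 //=.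
have := uv s s01; have := u_le s01; rewrite ler_norml => ? /andP[? ?]; lra.
Qed.

Lemma cball_boundary_ge {v : R -> R} {s : R} :
  Kcone a b c v -> cball u eps v -> s \in `[a, b] -> c * (rho - eps) <= v s.
Proof.
move=> Kv uv sab; have s01 := in01 sab.
have : rho <= u s by rewrite -min_u; apply: minab_le (Kcone_ge0 ha hb _ Ku) sab.
have [v_ge0 _] := andP (cball_boundary_range Kv uv s01).
have := uv s s01; rewrite ler_norml => /andP[? ?] ?.
have [rho_eps|rho_eps] := lerP (rho - eps) 0.
  by have := mulr_ge0_le0 (ltW hc0) rho_eps; lra.
by have := ler_piMl (ltW rho_eps) hc1; lra.
Qed.

Lemma Top_ge_near_boundary v t : Kcone a b c v -> cball u eps v ->
  t \in `[a, b] -> rho * F * m <= Top k g f v t.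
Proof.
move=> Kv uv tab; have [v_cont [v_ge0 _]] := Kv.
have r_gt0 : 0 < rho / c + eps by rewrite ltr_wpDl // ltW // divr_gt0.
have [Rb _ f_le_Rb] := hfbd _ r_gt0.
have F_le_f s : s \in `[a, b] -> rho * F <= f s (v s).
  move=> sab; have /andP[? ?] := cball_boundary_range Kv uv (in01 sab).
  apply: f_re_le => //; last exact: cball_boundary_ge Kv uv sab.
  by move=> s' x /in01; exact: hf0.
apply: le_trans (Top_ge hgmeas hg0 k_meas hk0 hPhimeas hPhi0 hPhig hkPhi
  _ _ _ _ hf0 (hfmeas v v_cont v_ge0) f_le_Rb
  (fun s => cball_boundary_range Kv uv) ab01 _ F_le_f (in01 tab)); last first.
  by rewrite mulr_ge0 ?ltW.
by rewrite ler_wpM2l ?mulr_ge0 ?(ltW hrho) ?(ltW F_gt0) ?m_le.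
Qed.

Lemma envelope_translate_minab_gt {y : R -> R} {lam : R} :
  envelope (Kcone a b c) (Top k g f) u y -> 0 <= lam ->
  (forall t, t \in `[0, 1] -> u t = y t + lam) -> rho < minab a b u.
Proof.
move=> y_env lam_ge0 u_eq.
apply: (lt_le_trans rho_lt); apply: minab_ge => // t tab.
have y_ge : rho * F * m <= y t.
  apply: (clconvhull_ge _ (in01 tab) (y_env _ heps)).
  by move=> _ [v [Kv [uv ->]]]; exact: Top_ge_near_boundary.
by rewrite u_eq ?in01 //; lra.
Qed.

End boundary_condition.

Theorem lemma3 (R : realType) (a b c : R) (f : R -> R -> R) (g : R -> R)
  (k : R -> R -> R) (Phi : R -> R) (rho eps : R)
  (* [a,b] ⊂ [0,1], c ∈ (0,1] *)
  (ha : 0 <= a) (hab : a <= b) (hb : b <= 1) (hc0 : 0 < c) (hc1 : c <= 1)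
  (* (H1) *)
  (hf0 : forall t x, t \in `[0, 1] -> 0 <= x -> 0 <= f t x)
  (hfmeas : forall u : R -> R, isC u -> (forall t, t \in `[0, 1] -> 0 <= u t) ->
     measurable_fun (`[0, 1] : set R) (fun t => f t (u t)))
  (hfbd : forall r : R, 0 < r -> exists2 Rb : R, 0 < Rb &
     {ae @lebesgue_measure R, forall t, t \in `[0, 1] ->
        forall x, 0 <= x <= r -> f t x <= Rb})
  (* (H2) *)
  (hgmeas : measurable_fun (`[0, 1] : set R) g)
  (hg0 : {ae @lebesgue_measure R, forall t, t \in `[0, 1] -> 0 <= g t})
  (* (H3) *)
  (hkc : {within [set p : R * R | p.1 \in `[0, 1] /\ p.2 \in `[0, 1]],
           continuous (fun p : R * R => k p.1 p.2)})
  (hk0 : forall t s, t \in `[0, 1] -> s \in `[0, 1] -> 0 <= k t s)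
  (* (H4) *)
  (hPhimeas : measurable_fun (`[0, 1] : set R) Phi)
  (hPhi0 : forall s, s \in `[0, 1] -> 0 <= Phi s)
  (hPhig : (@lebesgue_measure R).-integrable `[0, 1] (fun s => (Phi s * g s)%:E))
  (hPhigpos : (0 < \int[@lebesgue_measure R]_(s in `[a, b]) (Phi s * g s)%:E)%E)
  (hkPhi : forall t s, t \in `[0, 1] -> s \in `[0, 1] -> k t s <= Phi s)
  (hPhik : forall t s, t \in `[a, b] -> s \in `[0, 1] -> c * Phi s <= k t s)
  (* {u} ∩ 𝕋u ⊂ {Tu} for u ∈ K ∩ 𝕋K *)
  (hfix : forall u, Kcone a b c u ->
     envelopeK (Kcone a b c) (Top k g f) u ->
     envelope (Kcone a b c) (Top k g f) u u ->
     forall t, t \in `[0, 1] -> u t = Top k g f u t)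
  (* ρ, ε with f_{ρ,ε} > M(a,b) *)
  (hrho : 0 < rho) (heps : 0 < eps)
  (hfM : Mab a b k g < f_re a b c f rho eps) :
  forall u, rel_boundary (Kcone a b c)
              (fun v => Kcone a b c v /\ minab a b v < rho) u ->
  forall lam : R, 0 <= lam ->
  ~ (exists y, envelope (Kcone a b c) (Top k g f) u y /\
               forall t, t \in `[0, 1] -> u t = y t + lam).
Proof.
move=> u u_bdry lam lam_ge0 [y [y_env u_eq]].
have min_u := rel_boundary_minab ha hab hb (Kcone_ge0 ha hb) u_bdry.
have := envelope_translate_minab_gt ha hab hb hc0 hc1 hf0 hfmeas hfbd hgmeas hg0
  hkc hk0 hPhimeas hPhi0 hPhig hPhigpos hkPhi hPhik hrho heps hfM u_bdry.1 min_u
  y_env lam_ge0 u_eq.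
by rewrite min_u ltxx.
Qed.
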